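(* Let $r,m,s$ be positive integers with $\gcd(r,2^{3m}-1)=1$, and let $a,b\in\mathbb{F}_{2^{3m}}^*$. Put $A=a^{2^{2m}+2^m+1}+1$ and $B=a^{2^{2m}}b^{2^m}+a^{2^{2m}+2^m}b+b^{2^{2m}}$. Then the polynomial \[ f(x)=x^r\left(x^{2^m(2^m-1)}+ax^{2^m-1}+b\right)^{s(2^{2m}+2^m+1)} \] is a permutation polynomial of $\mathbb{F}_{2^{3m}}$ in each of the following two cases: (i) $A\neq 0$ and $(B/A)^{2^{2m}+2^m+1}\neq 1$; (ii) $A=0$ and $B\neq 0$.
   Context: A polynomial is a permutation polynomial of a finite field if it induces a bijection of that field. *)

From HB Require Import structures.
From mathcomp Require Import all_boot all_order all_algebra all_field.
Set Implicit Arguments. Unset Strict Implicit. Unset Printing Implicit Defensive.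
Import GRing.Theory.
Local Open Scope ring_scope.

Definition is_perm_poly (F : finFieldType) (p : {poly F}) : Prop :=
  bijective (fun x : F => p.[x]).

From HB Require Import structures.
From mathcomp Require Import all_boot all_order all_algebra all_field.
From mathcomp Require Import ring zify.
Set Implicit Arguments. Unset Strict Implicit. Unset Printing Implicit Defensive.
Import GRing.Theory.
Local Open Scope ring_scope.

(* Write q = 2^m and N = q^2 + q + 1, so that #|F| - 1 = q^3 - 1 = (q - 1) N
   for F = GF(q^3).  The polynomial of the theorem has the shape
       f(x) = x^r * G(x^(q-1))^(s N),      G(y) = y^q + a y + b,
   and the proof splits into two independent parts.
   1. A general criterion (twisted_power_bij): over any finite field with
      n = #|F| - 1, if gcd(r, n) = 1, n divides d k and G does not vanish on
      the d-th powers of nonzero elements, then x |-> x^r G(x^d)^k is a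
      bijection.  Indeed f(x)^d = (x^d)^r, and x |-> x^r is injective.
   2. Over GF(q^3), a root y of the linearized polynomial y^q + a y + b
      satisfies A y = B (linearized_root_identity), obtained by applying
      Frobenius three times.  Every (q-1)-th power y of a nonzero element has
      y^N = 1, which the hypotheses on A and B rule out for such roots
      (no_root_of_norm_one).
   The theorem is then the criterion with d = q - 1 and k = s N. *)

Section PowerMapsOnFiniteFields.
Variable F : finFieldType.

Lemma expf_card_pred (x : F) : x != 0 -> x ^+ #|F|.-1 = 1.
Proof.
move=> x_nz; apply: (mulfI x_nz); rewrite mulr1 -exprS.
by rewrite prednK ?expf_card // (ltn_trans _ (finNzRing_gt1 F)).
Qed.

(* A power map whose exponent is coprime to #|F| - 1 is injective: it is
   inverted by the power map with a Bezout inverse exponent. *)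
Lemma expf_coprime_inj (r : nat) :
  (0 < r)%N -> coprime r #|F|.-1 -> injective (fun x : F => x ^+ r).
Proof.
move=> r_gt0 co_r; have [u v Bezout _] := egcdnP #|F|.-1 r_gt0.
rewrite (eqP co_r) in Bezout.
have inv_pow (x : F) : (x ^+ r) ^+ u = x.
  rewrite -exprM mulnC Bezout exprD expr1.
  have [->|x_nz] := eqVneq x 0; first by rewrite mulr0.
  by rewrite mulnC exprM expf_card_pred // expr1n mul1r.
by move=> x y /= /(congr1 (fun z => z ^+ u)); rewrite !inv_pow.
Qed.

(* Permutation criterion for x^r G(x^d)^k (in the style of Akbary-Ghioca-Wang):
   raising to the d-th power gives (x^d)^r, which recovers x^d, hence G(x^d),
   hence x^r, hence x. *)
Lemma twisted_power_bij (r d k : nat) (G : F -> F) :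
  (0 < r)%N -> coprime r #|F|.-1 -> (#|F|.-1 %| d * k)%N ->
  (forall x : F, x != 0 -> G (x ^+ d) != 0) ->
  bijective (fun x : F => x ^+ r * G (x ^+ d) ^+ k).
Proof.
move=> r_gt0 co_r /dvdnP[c dk_eq] G_nz.
have r_inj := expf_coprime_inj r_gt0 co_r.
set f := fun x => _.
have f_eq0 x : (f x == 0) = (x == 0).
  rewrite /f mulf_eq0 !expf_eq0 r_gt0 /=.
  by have [//|x_nz] := eqVneq x 0; rewrite (negPf (G_nz x x_nz)) andbF.
have f_pow_d x : x != 0 -> f x ^+ d = (x ^+ d) ^+ r.
  move=> x_nz; rewrite exprMn -!exprM [(k * d)%N]mulnC dk_eq [(c * _)%N]mulnC.
  by rewrite [G _ ^+ _]exprM expf_card_pred ?G_nz // expr1n mulr1 mulnC exprM.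
apply: injF_bij => x y fxy.
have [x0|x_nz] := eqVneq x 0.
  by apply/esym/eqP; rewrite x0 -f_eq0 -fxy f_eq0 x0.
have [y0|y_nz] := eqVneq y 0; first by apply/eqP; rewrite y0 -f_eq0 fxy f_eq0 y0.
have same_dpow : x ^+ d = y ^+ d by apply: r_inj; rewrite /= -!f_pow_d // fxy.
apply: r_inj; apply: (mulIf (expf_neq0 k (G_nz x x_nz))).
by rewrite /= -/(f x) fxy /f same_dpow.
Qed.

End PowerMapsOnFiniteFields.

Section LinearizedPolynomialsOverGF2cubed.
Variables (F : finFieldType) (m : nat).
Hypothesis cardF : #|F| = (2 ^ (3 * m))%N.

Local Notation q := (2 ^ m)%N.
Local Notation N := (2 ^ (2 * m) + 2 ^ m + 1)%N.

Lemma pcharF2 : 2 \in [pchar F].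
Proof. exact: card_finPcharP cardF _. Qed.

Lemma frobeniusD (u v : F) : (u + v) ^+ q = u ^+ q + v ^+ q.
Proof.
by apply: exprDn_pchar; rewrite pnatX (pnatE _ (isT : prime 2)) pcharF2.
Qed.

(* Iterating y^q = a y + b three times and using y^(q^3) = y gives a linear
   equation for y with coefficients A = a^N + 1 and B below. *)
Lemma linearized_root_identity (a b y : F) :
  y ^+ q + a * y + b = 0 ->
  (a ^+ N + 1) * y =
    a ^+ (2 ^ (2 * m)) * b ^+ q + a ^+ (2 ^ (2 * m) + q) * b + b ^+ (2 ^ (2 * m)).
Proof.
move=> root_y.
have q2 : (2 ^ (2 * m) = q * q)%N by rewrite -expnD addnn -mul2n.
have q3 : (2 ^ (3 * m) = q * q * q)%N by rewrite -!expnD; congr (2 ^ _)%N; lia.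
have frob1 : y ^+ q = a * y + b.
  by rewrite -[RHS](oppr_pchar2 pcharF2); apply/eqP; rewrite -addr_eq0 addrA root_y.
have frob2 : y ^+ (q * q) = a ^+ q * (a * y + b) + b ^+ q.
  by rewrite exprM frob1 frobeniusD exprMn frob1.
have frob3 : y = a ^+ (q * q) * (a ^+ q * (a * y + b) + b ^+ q) + b ^+ (q * q).
  rewrite -{1}(expf_card y) cardF q3 exprM frob2.
  by rewrite frobeniusD exprMn frobeniusD exprMn frob1 -!exprM.
rewrite q2 !exprD !expr1 mulrDl mul1r {2}frob3.
have double_term (P Q X Y : F) :
    P * Q * a * y + (P * (Q * (a * y + b) + X) + Y) =
    (P * Q * a * y) *+ 2 + (P * X + P * Q * b + Y) by ring.
by rewrite double_term (mulrn_pchar pcharF2) add0r.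
Qed.

(* Under either hypothesis of the theorem, y^q + a y + b has no root y with
   y^N = 1: such a root would equal B / A (resp. force B = 0). *)
Lemma no_root_of_norm_one (a b : F) :
  let A := a ^+ N + 1 in
  let B := a ^+ (2 ^ (2 * m)) * b ^+ q + a ^+ (2 ^ (2 * m) + q) * b
           + b ^+ (2 ^ (2 * m)) in
  (A != 0 /\ (B / A) ^+ N != 1) \/ (A = 0 /\ B != 0) ->
  forall y : F, y ^+ N = 1 -> y ^+ q + a * y + b != 0.
Proof.
move=> A B hyp y norm_y; apply/eqP => /linearized_root_identity AyB.
case: hyp => [[A_nz]|[A0]]; rewrite /B -AyB -/A.
  by rewrite [A * y]mulrC mulfK // norm_y eqxx.
by rewrite A0 mul0r eqxx.
Qed.

End LinearizedPolynomialsOverGF2cubed.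

Theorem proposition9 (F : finFieldType) (r m s : nat)
  (hr : (0 < r)%N) (hm : (0 < m)%N) (hs : (0 < s)%N)
  (hF : #|F| = (2 ^ (3 * m))%N)
  (hgcd : coprime r (2 ^ (3 * m) - 1))
  (a b : F) (ha : a != 0) (hb : b != 0) :
  let A := a ^+ (2 ^ (2 * m) + 2 ^ m + 1) + 1 in
  let B := a ^+ (2 ^ (2 * m)) * b ^+ (2 ^ m)
           + a ^+ (2 ^ (2 * m) + 2 ^ m) * b + b ^+ (2 ^ (2 * m)) in
  let f : {poly F} :=
    'X^r * ('X^(2 ^ m * (2 ^ m - 1)) + a *: 'X^(2 ^ m - 1) + b%:P)
             ^+ (s * (2 ^ (2 * m) + 2 ^ m + 1)) in
  ((A != 0 /\ (B / A) ^+ (2 ^ (2 * m) + 2 ^ m + 1) != 1) \/ (A = 0 /\ B != 0)) ->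
  is_perm_poly f.
Proof.
move=> A B f hyp.
pose G (y : F) := y ^+ (2 ^ m) + a * y + b.
have card_factor : ((2 ^ m - 1) * (2 ^ (2 * m) + 2 ^ m + 1) = #|F|.-1)%N.
  have q_gt0 : (0 < 2 ^ m)%N by rewrite expn_gt0.
  have q2 : (2 ^ (2 * m) = 2 ^ m * 2 ^ m)%N by rewrite -expnD addnn -mul2n.
  have q3 : (2 ^ (3 * m) = 2 ^ m * 2 ^ m * 2 ^ m)%N.
    by rewrite -!expnD; congr (2 ^ _)%N; lia.
  rewrite hF -subn1 q2 q3; move: q_gt0; set q := (2 ^ m)%N; nia.
have G_nz (x : F) : x != 0 -> G (x ^+ (2 ^ m - 1)) != 0.
  move=> x_nz; apply: (no_root_of_norm_one hF hyp).
  by rewrite -exprM card_factor expf_card_pred.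
have f_eval (x : F) :
    f.[x] = x ^+ r * G (x ^+ (2 ^ m - 1)) ^+ (s * (2 ^ (2 * m) + 2 ^ m + 1)).
  by rewrite /f /G !hornerE [(2 ^ m * _)%N]mulnC [x ^+ (_ * _)]exprM.
apply: eq_bij (fun x => esym (f_eval x)).
apply: twisted_power_bij => //; first by rewrite hF -subn1.
by rewrite -card_factor mulnCA dvdn_mull.
Qed.
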